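(* Let $E=\{z_1,\dots,z_n\}\subset\mathbb{R}^2$, $n\ge3$, with $z_i\,\mathcal{I}\,z_j$ for all $i\neq j$. For each of the variants Max-Min, Max-Sum, Max-Sum-Min, Max-Min-Sum and Max-Sum-Neighbor, the $3$-dispersion problem in $E$ is solvable in $O(n)$ time using $O(1)$ additional memory space.
   Context: For $y=(y^1,y^2),z=(z^1,z^2)\in\mathbb{R}^2$ write $y\prec z$ iff $y^1<z^1$ and $y^2>z^2$, and $y\,\mathcal{I}\,z$ iff $y\prec z$ or $z\prec y$. Fix $\alpha>0$ and let $d$ be the Euclidean distance. For $2\le p\le n$, let $D_p$ be the set of $p$-tuples $(w_1,\dots,w_p)\in E^p$ of pairwise distinct points, $\delta_{ij}=d(w_i,w_j)^\alpha$. The $p$-dispersion problems maximize over $D_p$: Max-Min: $\min_{1\le i<j\le p}\delta_{ij}$; Max-Sum: $\sum_{1\le i<j\le p}\delta_{ij}$; Max-Sum-Min: $\sum_{i=1}^p\min_{j\ne i}\delta_{ij}$; Max-Min-Sum: $\min_{1\le i\le p}\sum_{j\ne i}\delta_{ij}$. For Max-Sum-Neighbor, index $E$ as $x_1,\dots,x_n$ with increasing first coordinates and maximize $\sum_{j=1}^{p-1}d(x_{i_j},x_{i_{j+1}})^\alpha$ over $1\le i_1<\dots<i_p\le n$. Complexities are in a model where arithmetic operations, comparisons and evaluation of $d(\cdot,\cdot)^\alpha$ take $O(1)$ time; ''additional memory space'' excludes the input. *)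

From Stdlib Require Import Reals List.
Import ListNotations.
Open Scope R_scope.

Definition pt : Type := (R * R)%type.

Definition prec (y z : pt) : Prop := fst y < fst z /\ snd y > snd z.

Definition incomp (y z : pt) : Prop := prec y z \/ prec z y.

Definition dist2 (y z : pt) : R :=
  sqrt ((fst y - fst z) ^ 2 + (snd y - snd z) ^ 2).

(** delta = d(y,z)^alpha (only ever used on distinct points, where d > 0) *)
Definition delta (alpha : R) (y z : pt) : R := Rpower (dist2 y z) alpha.

Inductive variant : Type :=
  | MaxMin | MaxSum | MaxSumMin | MaxMinSum | MaxSumNeighbor.

Definition D3 (E : list pt) (w1 w2 w3 : pt) : Prop :=
  In w1 E /\ In w2 E /\ In w3 E /\ w1 <> w2 /\ w1 <> w3 /\ w2 <> w3.

Definition obj_MaxMin (a : R) (w1 w2 w3 : pt) : R :=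
  Rmin (Rmin (delta a w1 w2) (delta a w1 w3)) (delta a w2 w3).

Definition obj_MaxSum (a : R) (w1 w2 w3 : pt) : R :=
  delta a w1 w2 + delta a w1 w3 + delta a w2 w3.

Definition obj_MaxSumMin (a : R) (w1 w2 w3 : pt) : R :=
  Rmin (delta a w1 w2) (delta a w1 w3)
  + Rmin (delta a w2 w1) (delta a w2 w3)
  + Rmin (delta a w3 w1) (delta a w3 w2).

Definition obj_MaxMinSum (a : R) (w1 w2 w3 : pt) : R :=
  Rmin (Rmin (delta a w1 w2 + delta a w1 w3)
             (delta a w2 w1 + delta a w2 w3))
       (delta a w3 w1 + delta a w3 w2).

(** Max-Sum-Neighbor: E indexed x_1..x_n by increasing first coordinate;
    an index triple i1 < i2 < i3 is exactly a triple of points of E with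
    strictly increasing first coordinates (first coordinates are pairwise
    distinct under the incomparability hypothesis). *)
Definition Dnb (E : list pt) (w1 w2 w3 : pt) : Prop :=
  In w1 E /\ In w2 E /\ In w3 E /\ fst w1 < fst w2 /\ fst w2 < fst w3.

Definition obj_Neighbor (a : R) (w1 w2 w3 : pt) : R :=
  delta a w1 w2 + delta a w2 w3.

Definition obj (v : variant) : R -> pt -> pt -> pt -> R :=
  match v with
  | MaxMin => obj_MaxMin
  | MaxSum => obj_MaxSum
  | MaxSumMin => obj_MaxSumMin
  | MaxMinSum => obj_MaxMinSum
  | MaxSumNeighbor => obj_Neighbor
  end.

Definition feasible (v : variant) : list pt -> pt -> pt -> pt -> Prop :=
  match v with
  | MaxSumNeighbor => Dnb
  | _ => D3
  end.

Definition optimal (v : variant) (alpha : R) (E : list pt) (w : pt * pt * pt) : Prop :=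
  let '(w1, w2, w3) := w in
  feasible v E w1 w2 w3 /\
  forall u1 u2 u3, feasible v E u1 u2 u3 ->
    obj v alpha u1 u2 u3 <= obj v alpha w1 w2 w3.

(** A program has finitely many real registers (those it mentions), an
   initialisation command, a FIXED finite list of passes (each pass runs one
   fixed command on every input point, in input order), and a final command.
   Commands are built from O(1)-time primitives: arithmetic, comparisons,
   and evaluation of d(.,.)^alpha.  Since the program text does not depend
   on n, every such program runs in O(n) time with O(1) additional memory. *)

Inductive expr : Type :=
  | EConst (c : R)
  | EReg (i : nat)
  | EIn1
  | EIn2
  | EAdd (e1 e2 : expr)
  | ESub (e1 e2 : expr)
  | EMul (e1 e2 : expr)
  | EDelta (x1 y1 x2 y2 : expr).

Inductive cmd : Type :=
  | CSkip
  | CSet (i : nat) (e : expr)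
  | CSeq (c1 c2 : cmd)
  | CIfLe (e1 e2 : expr) (c1 c2 : cmd).

Definition regs : Type := nat -> R.

Fixpoint eval_expr (alpha : R) (cur : pt) (rho : regs) (e : expr) : R :=
  match e with
  | EConst c => c
  | EReg i => rho i
  | EIn1 => fst cur
  | EIn2 => snd cur
  | EAdd e1 e2 => eval_expr alpha cur rho e1 + eval_expr alpha cur rho e2
  | ESub e1 e2 => eval_expr alpha cur rho e1 - eval_expr alpha cur rho e2
  | EMul e1 e2 => eval_expr alpha cur rho e1 * eval_expr alpha cur rho e2
  | EDelta x1 y1 x2 y2 =>
      delta alpha (eval_expr alpha cur rho x1, eval_expr alpha cur rho y1)
                  (eval_expr alpha cur rho x2, eval_expr alpha cur rho y2)
  end.

Definition upd (rho : regs) (i : nat) (x : R) : regs :=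
  fun j => if Nat.eqb j i then x else rho j.

Fixpoint exec (alpha : R) (cur : pt) (rho : regs) (c : cmd) : regs :=
  match c with
  | CSkip => rho
  | CSet i e => upd rho i (eval_expr alpha cur rho e)
  | CSeq c1 c2 => exec alpha cur (exec alpha cur rho c1) c2
  | CIfLe e1 e2 c1 c2 =>
      if Rle_dec (eval_expr alpha cur rho e1) (eval_expr alpha cur rho e2)
      then exec alpha cur rho c1 else exec alpha cur rho c2
  end.

Record program : Type := Program {
  p_init : cmd;
  p_passes : list cmd;
  p_final : cmd
}.

Definition run_pass (alpha : R) (E : list pt) (rho : regs) (c : cmd) : regs :=
  fold_left (fun r z => exec alpha z r c) E rho.

Definition run (alpha : R) (P : program) (E : list pt) : pt * pt * pt :=
  let r0 := exec alpha (0, 0) (fun _ => 0) (p_init P) in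
  let r1 := fold_left (run_pass alpha E) (p_passes P) r0 in
  let r2 := exec alpha (0, 0) r1 (p_final P) in
  ((r2 0%nat, r2 1%nat), (r2 2%nat, r2 3%nat), (r2 4%nat, r2 5%nat)).

(* Pairwise incomparable points form a staircase: ordered by first coordinate,
   their second coordinates decrease.  Along a staircase, distances are monotone:
   an inner pair is never farther apart than an enclosing pair.  So for a feasible
   triple p, q, r sorted by first coordinate, replacing p by the leftmost point L
   and r by the rightmost point R decreases none of the three dissimilarities, and
   every objective is monotone in them (the four symmetric ones are moreover
   invariant under reordering the triple).  Hence (L, M, R) is optimal when M
   maximizes the objective among the points strictly between L and R, and three
   scans compute it: one loads some point of E, one finds the extremes, one the
   best middle point. *)

From Stdlib Require Import Reals List Lra Lia Classical.
Import ListNotations.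
Open Scope R_scope.

Definition staircase_le (p q : pt) : Prop := fst p <= fst q /\ snd q <= snd p.

Lemma staircase_le_refl p : staircase_le p p.
Proof. unfold staircase_le; lra. Qed.

Lemma dist2_staircase_mono a b c d :
  staircase_le a b -> staircase_le b c -> staircase_le c d -> dist2 b c <= dist2 a d.
Proof.
  unfold staircase_le, dist2; intros [Hab Hab'] [Hbc Hbc'] [Hcd Hcd'].
  apply sqrt_le_1_alt; simpl; rewrite !Rmult_1_r.
  assert ((fst b - fst c) * (fst b - fst c) <= (fst a - fst d) * (fst a - fst d)) by nra.
  assert ((snd b - snd c) * (snd b - snd c) <= (snd a - snd d) * (snd a - snd d)) by nra.
  lra.
Qed.

Lemma dist2_pos_of_fst_lt p q : fst p < fst q -> 0 < dist2 p q.
Proof.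
  intros Hpq; unfold dist2; apply sqrt_lt_R0; simpl; rewrite !Rmult_1_r.
  pose proof (Rle_0_sqr (snd p - snd q)); unfold Rsqr in *; nra.
Qed.

Lemma delta_sym a p q : delta a p q = delta a q p.
Proof. unfold delta, dist2; do 2 f_equal; ring. Qed.

Lemma delta_pos a p q : 0 < delta a p q.
Proof. apply exp_pos. Qed.

Lemma delta_staircase_mono alpha a b c d : 0 < alpha -> fst b < fst c ->
  staircase_le a b -> staircase_le b c -> staircase_le c d ->
  delta alpha b c <= delta alpha a d.
Proof.
  intros Halpha Hbc Hab Hbc' Hcd; apply Rle_Rpower_l; [lra|].
  split; [apply dist2_pos_of_fst_lt | apply dist2_staircase_mono]; assumption.
Qed.

Section Incomparable.
Variable E : list pt.
Hypothesis incomp_E : forall y z, In y E -> In z E -> y <> z -> incomp y z.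

Lemma staircase_le_of_fst_le p q : In p E -> In q E -> fst p <= fst q -> staircase_le p q.
Proof.
  intros Hp Hq Hle; destruct (classic (p = q)) as [<-|Hne]; [apply staircase_le_refl|].
  destruct (incomp_E p q Hp Hq Hne) as [[? ?]|[? ?]]; unfold staircase_le; lra.
Qed.

Lemma fst_neq_of_neq p q : In p E -> In q E -> p <> q -> fst p <> fst q.
Proof. intros Hp Hq Hne; destruct (incomp_E p q Hp Hq Hne) as [[? ?]|[? ?]]; lra. Qed.

End Incomparable.

Ltac Rmin_cases := unfold Rmin; repeat destruct Rle_dec; lra.

Ltac unfold_obj :=
  cbn [obj]; unfold obj_MaxMin, obj_MaxSum, obj_MaxSumMin, obj_MaxMinSum, obj_Neighbor.

Lemma obj_swap12 v a u1 u2 u3 : v <> MaxSumNeighbor ->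
  obj v a u1 u2 u3 = obj v a u2 u1 u3.
Proof.
  intros Hv; destruct v; try congruence; unfold_obj;
    rewrite ?(delta_sym a u2 u1), ?(delta_sym a u3 u1), ?(delta_sym a u3 u2); Rmin_cases.
Qed.

Lemma obj_swap23 v a u1 u2 u3 : v <> MaxSumNeighbor ->
  obj v a u1 u2 u3 = obj v a u1 u3 u2.
Proof.
  intros Hv; destruct v; try congruence; unfold_obj;
    rewrite ?(delta_sym a u2 u1), ?(delta_sym a u3 u1), ?(delta_sym a u3 u2); Rmin_cases.
Qed.

Lemma obj_le_of_delta_le v a u1 u2 u3 w1 w2 w3 :
  delta a u1 u2 <= delta a w1 w2 ->
  delta a u1 u3 <= delta a w1 w3 ->
  delta a u2 u3 <= delta a w2 w3 ->
  obj v a u1 u2 u3 <= obj v a w1 w2 w3.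
Proof.
  intros H12 H13 H23; destruct v; unfold_obj;
    rewrite ?(delta_sym a u2 u1), ?(delta_sym a u3 u1), ?(delta_sym a u3 u2),
            ?(delta_sym a w2 w1), ?(delta_sym a w3 w1), ?(delta_sym a w3 w2); Rmin_cases.
Qed.

Lemma obj_pos v a u1 u2 u3 : 0 < obj v a u1 u2 u3.
Proof.
  pose proof (delta_pos a u1 u2); pose proof (delta_pos a u1 u3);
  pose proof (delta_pos a u2 u3); pose proof (delta_pos a u2 u1);
  pose proof (delta_pos a u3 u1); pose proof (delta_pos a u3 u2).
  destruct v; unfold_obj; Rmin_cases.
Qed.

Lemma sort3_ind {A} (key : A -> R) (Q : A -> A -> A -> Prop) :
  (forall a b c, Q a b c -> Q b a c) -> (forall a b c, Q a b c -> Q a c b) ->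
  (forall a b c, key a < key b < key c -> Q a b c) ->
  forall a b c, key a <> key b -> key a <> key c -> key b <> key c -> Q a b c.
Proof.
  intros S12 S23 HQ a b c Hab Hac Hbc.
  destruct (Rlt_or_le (key a) (key b)), (Rlt_or_le (key a) (key c)),
           (Rlt_or_le (key b) (key c)).
  all: first [ apply HQ; lra
             | apply S12; apply HQ; lra
             | apply S23; apply HQ; lra
             | apply S12; apply S23; apply HQ; lra
             | apply S23; apply S12; apply HQ; lra
             | apply S12; apply S23; apply S12; apply HQ; lra
             | exfalso; lra ].
Qed.

Definition between (L R z : pt) : Prop := fst L < fst z < fst R.

Section Optimality.
Variables (v : variant) (alpha : R) (E : list pt) (L R : pt).
Hypothesis alpha_pos : 0 < alpha.
Hypothesis incomp_E : forall y z, In y E -> In z E -> y <> z -> incomp y z.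
Hypotheses (L_in : In L E) (R_in : In R E).
Hypothesis extreme_LR : forall z, In z E -> fst L <= fst z <= fst R.

Lemma obj_le_extremes p q r : In p E -> In q E -> In r E -> fst p < fst q < fst r ->
  obj v alpha p q r <= obj v alpha L q R.
Proof.
  intros Hp Hq Hr Hpqr.
  pose proof (extreme_LR p Hp); pose proof (extreme_LR q Hq); pose proof (extreme_LR r Hr).
  assert (Hle : forall x y, In x E -> In y E -> fst x <= fst y -> staircase_le x y)
    by exact (staircase_le_of_fst_le E incomp_E).
  apply obj_le_of_delta_le; apply delta_staircase_mono; try lra;
    try apply staircase_le_refl; apply Hle; auto; lra.
Qed.

Lemma optimal_of_best_middle M : In M E -> between L R M ->
  (forall z, In z E -> between L R z -> obj v alpha L z R <= obj v alpha L M R) ->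
  optimal v alpha E (L, M, R).
Proof.
  intros HM [HLM HMR] Hbest.
  assert (Hsorted : forall p q r, In p E -> In q E -> In r E -> fst p < fst q < fst r ->
            obj v alpha p q r <= obj v alpha L M R).
  { intros p q r Hp Hq Hr Hpqr.
    pose proof (extreme_LR p Hp); pose proof (extreme_LR r Hr).
    apply Rle_trans with (obj v alpha L q R);
      [apply obj_le_extremes | apply Hbest; [|split]]; auto; lra. }
  split.
  - destruct v; repeat split; auto; try lra; intros ->; lra.
  - intros u1 u2 u3 Hf; destruct v; cbn [feasible] in Hf;
      try (destruct Hf as (H1 & H2 & H3 & H12 & H23); apply Hsorted; auto; lra).
    all: destruct Hf as (H1 & H2 & H3 & H12 & H13 & H23).
    all: pose proof (fst_neq_of_neq E incomp_E _ _ H1 H2 H12);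
         pose proof (fst_neq_of_neq E incomp_E _ _ H1 H3 H13);
         pose proof (fst_neq_of_neq E incomp_E _ _ H2 H3 H23).
    all: revert H1 H2 H3; pattern u1, u2, u3; apply (sort3_ind fst); auto;
      [ intros x y z Hxyz Hy Hx Hz; rewrite obj_swap12 by discriminate
      | intros x y z Hxyz Hx Hz Hy; rewrite obj_swap23 by discriminate ]; auto.
Qed.

End Optimality.

Lemma fold_left_invariant {A B} (f : B -> A -> B) (E : list A) (I : list A -> B -> Prop) b :
  I [] b -> (forall l z c, In z E -> I l c -> I (l ++ [z]) (f c z)) ->
  I E (fold_left f E b).
Proof.
  intros H0 Hstep.
  enough (H : forall l, incl l E -> I l (fold_left f l b)) by exact (H E (incl_refl E)).
  induction l as [|z l IH] using rev_ind; intros Hl; [exact H0|].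
  rewrite fold_left_app; apply Hstep.
  - apply Hl, in_or_app; right; left; reflexivity.
  - apply IH; intros y Hy; apply Hl, in_or_app; left; exact Hy.
Qed.

(* Register layout: 0-1, 2-3 and 4-5 hold the left, middle and right points (read
   off by [run] as the answer), 7 the best objective value found so far, 20-23 are
   scratch.  The best value may start at 0 because every objective is positive.
   While scanning, a triple is (left point, current input point, right point). *)
Definition reg_pt (r : regs) (i : nat) : pt := (r i, r (S i)).

Definition take_point (i : nat) : cmd := CSeq (CSet i EIn1) (CSet (S i) EIn2).

Definition cmd_min (k : nat) (e1 e2 : expr) : cmd := CIfLe e1 e2 (CSet k e1) (CSet k e2).

Lemma exec_cmd_min a z r k e1 e2 :
  exec a z r (cmd_min k e1 e2) = upd r k (Rmin (eval_expr a z r e1) (eval_expr a z r e2)).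
Proof. unfold cmd_min, Rmin; cbn [exec]; destruct Rle_dec; reflexivity. Qed.

Definition d12 := EDelta (EReg 0) (EReg 1) EIn1 EIn2.
Definition d13 := EDelta (EReg 0) (EReg 1) (EReg 4) (EReg 5).
Definition d23 := EDelta EIn1 EIn2 (EReg 4) (EReg 5).
Definition d21 := EDelta EIn1 EIn2 (EReg 0) (EReg 1).
Definition d31 := EDelta (EReg 4) (EReg 5) (EReg 0) (EReg 1).
Definition d32 := EDelta (EReg 4) (EReg 5) EIn1 EIn2.

Definition obj_cmd (v : variant) : cmd :=
  match v with
  | MaxMin => CSeq (cmd_min 21 d12 d13) (cmd_min 20 (EReg 21) d23)
  | MaxSum => CSet 20 (EAdd (EAdd d12 d13) d23)
  | MaxSumMin =>
      CSeq (cmd_min 21 d12 d13) (CSeq (cmd_min 22 d21 d23) (CSeq (cmd_min 23 d31 d32)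
        (CSet 20 (EAdd (EAdd (EReg 21) (EReg 22)) (EReg 23)))))
  | MaxMinSum =>
      CSeq (cmd_min 21 (EAdd d12 d13) (EAdd d21 d23)) (cmd_min 20 (EReg 21) (EAdd d31 d32))
  | MaxSumNeighbor => CSet 20 (EAdd d12 d23)
  end.

Lemma exec_obj_cmd_value v a z r :
  exec a z r (obj_cmd v) 20%nat = obj v a (reg_pt r 0) z (reg_pt r 4).
Proof.
  destruct z; destruct v; cbn [obj_cmd exec]; rewrite ?exec_cmd_min; reflexivity.
Qed.

Lemma exec_obj_cmd_keep v a z r j : (j < 20)%nat -> exec a z r (obj_cmd v) j = r j.
Proof.
  intros Hj.
  assert (Hneq : forall k, (20 <= k)%nat -> Nat.eqb j k = false)
    by (intros; apply Nat.eqb_neq; lia).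
  destruct v; cbn [obj_cmd exec]; rewrite ?exec_cmd_min; unfold upd;
    rewrite ?Hneq by lia; reflexivity.
Qed.

Definition pass_any_point : cmd := CSeq (take_point 0) (take_point 4).

Definition pass_extremes : cmd :=
  CSeq (CIfLe (EReg 0) EIn1 CSkip (take_point 0)) (CIfLe EIn1 (EReg 4) CSkip (take_point 4)).

Definition pass_middle (v : variant) : cmd :=
  CSeq (obj_cmd v)
    (CIfLe EIn1 (EReg 0) CSkip (CIfLe (EReg 4) EIn1 CSkip
      (CIfLe (EReg 20) (EReg 7) CSkip (CSeq (take_point 2) (CSet 7 (EReg 20)))))).

Lemma pass_middle_step v a z r :
  let r' := exec a z r (pass_middle v) in
  let g := obj v a (reg_pt r 0) z (reg_pt r 4) in
  reg_pt r' 0 = reg_pt r 0 /\ reg_pt r' 4 = reg_pt r 4 /\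
  (between (reg_pt r 0) (reg_pt r 4) z /\ r 7%nat < g /\ reg_pt r' 2 = z /\ r' 7%nat = g \/
   ~ (between (reg_pt r 0) (reg_pt r 4) z /\ r 7%nat < g) /\
   reg_pt r' 2 = reg_pt r 2 /\ r' 7%nat = r 7%nat).
Proof.
  cbn zeta; rewrite <- (exec_obj_cmd_value v a z r).
  destruct z as [x y]; cbn [pass_middle exec].
  set (c := exec a (x, y) r (obj_cmd v)); unfold reg_pt.
  assert (Hkeep : forall j, (j < 20)%nat -> c j = r j)
    by (intros; apply exec_obj_cmd_keep; auto).
  rewrite <- !(Hkeep 0%nat), <- !(Hkeep 1%nat), <- !(Hkeep 2%nat), <- !(Hkeep 3%nat),
    <- !(Hkeep 4%nat), <- !(Hkeep 5%nat), <- !(Hkeep 7%nat) by lia.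
  unfold between; cbn [eval_expr exec take_point fst snd];
    repeat destruct Rle_dec; unfold upd; do 2 (split; [reflexivity|]).
  1-3: right; split; [intros [? ?]; lra | split; reflexivity].
  left; repeat split; lra.
Qed.

Lemma run_pass_any_point a E r : E <> [] -> r 7%nat = 0 ->
  let r' := run_pass a E r pass_any_point in
  r' 7%nat = 0 /\ In (reg_pt r' 0) E /\ reg_pt r' 4 = reg_pt r' 0.
Proof.
  intros HE H7; unfold run_pass.
  pose (I := fun (l : list pt) (c : regs) =>
    c 7%nat = 0 /\ (l = [] \/ In (reg_pt c 0) E /\ reg_pt c 4 = reg_pt c 0)).
  destruct (fold_left_invariant (fun c z => exec a z c pass_any_point) E I r)
    as [H7' [Hnil|Hin]]; [| |congruence|exact (conj H7' Hin)].
  - split; [exact H7 | left; reflexivity].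
  - intros l [x y] c Hz [Hc7 _]; split; [exact Hc7 | right; split; [exact Hz | reflexivity]].
Qed.

Lemma run_pass_extremes a E r :
  r 7%nat = 0 -> In (reg_pt r 0) E -> In (reg_pt r 4) E -> r 0%nat <= r 4%nat ->
  let r' := run_pass a E r pass_extremes in
  r' 7%nat = 0 /\ In (reg_pt r' 0) E /\ In (reg_pt r' 4) E /\
  forall z, In z E -> fst (reg_pt r' 0) <= fst z <= fst (reg_pt r' 4).
Proof.
  intros H7 H0 H4 H04; cbv zeta; unfold run_pass.
  pose (I := fun (l : list pt) (c : regs) => c 7%nat = 0 /\ In (reg_pt c 0) E /\
           In (reg_pt c 4) E /\ c 0%nat <= c 4%nat /\
           forall z, In z l -> fst (reg_pt c 0) <= fst z <= fst (reg_pt c 4)).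
  enough (Hinv : I E (fold_left (fun c z => exec a z c pass_extremes) E r))
    by (unfold I in Hinv; tauto).
  apply fold_left_invariant.
  - repeat split; auto; contradiction.
  - intros l [x y] c Hz (Hc7 & Hc0 & Hc4 & Hc04 & Hseen).
    unfold I; cbn [pass_extremes exec take_point eval_expr]; unfold reg_pt in *;
      repeat destruct Rle_dec; unfold upd in *; simpl in *;
      (split; [exact Hc7 | split; [auto | split; [auto | split; [lra |]]]]);
      intros w Hw; apply in_app_or in Hw;
      destruct Hw as [Hw|[<-|[]]]; try specialize (Hseen w Hw); cbn; lra.
Qed.

Lemma run_pass_middle v a E r : r 7%nat = 0 ->
  let L := reg_pt r 0 in let R := reg_pt r 4 in
  let r' := run_pass a E r (pass_middle v) in
  reg_pt r' 0 = L /\ reg_pt r' 4 = R /\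
  (forall z, In z E -> between L R z -> obj v a L z R <= r' 7%nat) /\
  (r' 7%nat = 0 \/
   In (reg_pt r' 2) E /\ between L R (reg_pt r' 2) /\ r' 7%nat = obj v a L (reg_pt r' 2) R).
Proof.
  intros H7 L R; unfold run_pass.
  apply (fold_left_invariant _ E (fun l c => reg_pt c 0 = L /\ reg_pt c 4 = R /\
           (forall z, In z l -> between L R z -> obj v a L z R <= c 7%nat) /\
           (c 7%nat = 0 \/ In (reg_pt c 2) E /\ between L R (reg_pt c 2) /\
                          c 7%nat = obj v a L (reg_pt c 2) R))).
  - repeat split; [intros z []|left; exact H7].
  - intros l z c Hz (Hc0 & Hc4 & Hseen & Hcand).
    destruct (pass_middle_step v a z c) as (H0' & H4' & Hcase).
    rewrite Hc0, Hc4 in *; rewrite H0', H4'; do 2 (split; [reflexivity|]).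
    destruct Hcase as [(Hzb & Hlt & H2 & H7') | (Hnot & H2 & H7')]; rewrite H2, H7'.
    + split; [|right; auto].
      intros w Hw Hwb; apply in_app_or in Hw; destruct Hw as [Hw|[<-|[]]];
        [pose proof (Hseen w Hw Hwb)|]; lra.
    + split; [|exact Hcand].
      intros w Hw Hwb; apply in_app_or in Hw; destruct Hw as [Hw|[<-|[]]];
        [exact (Hseen w Hw Hwb) | apply Rnot_lt_le; intros Hlt; exact (Hnot (conj Hwb Hlt))].
Qed.

Lemma NoDup_exists_third {A} (l : list A) (p q : A) : NoDup l -> (3 <= length l)%nat ->
  exists z, In z l /\ z <> p /\ z <> q.
Proof.
  intros Hnd Hlen; apply NNPP; intros Hnone.
  assert (Hincl : incl l [p; q]).
  { intros z Hz; destruct (classic (z = p)) as [->|Hp]; [left; reflexivity|].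
    destruct (classic (z = q)) as [->|Hq]; [right; left; reflexivity|].
    exfalso; apply Hnone; exists z; auto. }
  pose proof (NoDup_incl_length Hnd Hincl); cbn in *; lia.
Qed.

Lemma exists_between_extremes (E : list pt) (L R : pt) :
  NoDup E -> (3 <= length E)%nat ->
  (forall y z, In y E -> In z E -> y <> z -> incomp y z) ->
  In L E -> In R E -> (forall z, In z E -> fst L <= fst z <= fst R) ->
  exists M, In M E /\ between L R M.
Proof.
  intros Hnd Hlen Hinc HL HR Hext.
  destruct (NoDup_exists_third E L R Hnd Hlen) as (M & HM & HML & HMR).
  pose proof (fst_neq_of_neq E Hinc _ _ HM HL HML);
  pose proof (fst_neq_of_neq E Hinc _ _ HM HR HMR); pose proof (Hext M HM).
  exists M; split; [exact HM | unfold between; lra].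
Qed.

Theorem proposition6 (alpha : R) (Halpha : 0 < alpha) (v : variant) :
  exists P : program,
    forall E : list pt,
      (3 <= length E)%nat ->
      NoDup E ->
      (forall y z, In y E -> In z E -> y <> z -> incomp y z) ->
      optimal v alpha E (run alpha P E).
Proof.
  exists (Program CSkip [pass_any_point; pass_extremes; pass_middle v] CSkip).
  intros E Hlen Hnd Hinc.
  assert (HE : E <> []) by (intros ->; cbn in Hlen; lia).
  destruct (run_pass_any_point alpha E (fun _ => 0) HE eq_refl) as (A7 & A0 & A40).
  set (rA := run_pass alpha E (fun _ => 0) pass_any_point) in *.
  destruct (run_pass_extremes alpha E rA A7 A0 ltac:(rewrite A40; exact A0)
              ltac:(injection A40; lra)) as (B7 & BL & BR & Bext).
  set (rB := run_pass alpha E rA pass_extremes) in *.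
  destruct (run_pass_middle v alpha E rB B7) as (C0 & C4 & Cbest & Ccand).
  set (rC := run_pass alpha E rB (pass_middle v)) in *.
  change (optimal v alpha E (reg_pt rC 0, reg_pt rC 2, reg_pt rC 4)); rewrite C0, C4.
  destruct (exists_between_extremes E _ _ Hnd Hlen Hinc BL BR Bext) as (z & Hz & Hzb).
  destruct Ccand as [C7 | (HM & HMb & HMval)].
  - pose proof (Cbest z Hz Hzb).
    pose proof (obj_pos v alpha (reg_pt rB 0) z (reg_pt rB 4)); lra.
  - apply optimal_of_best_middle; auto; intros w Hw Hwb; rewrite <- HMval; auto.
Qed.
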